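(* Let $G(\lambda)\in\mathbb F(\lambda)^{p\times m}$ and let $L(\lambda)=\begin{bmatrix} A_1\lambda+A_0 & B_1\lambda+B_0\\ -(C_1\lambda+C_0) & D_1\lambda+D_0\end{bmatrix}$, with $A_1\lambda+A_0$ of size $n\times n$, be a linearization of $G(\lambda)$ with transfer function matrix $\widehat G(\lambda)=(D_1\lambda+D_0)+(C_1\lambda+C_0)(A_1\lambda+A_0)^{-1}(B_1\lambda+B_0)\in\mathbb F(\lambda)^{(p+s)\times(m+s)}$. Let $U(\lambda)\in\mathbb F[\lambda]^{(p+s)\times(p+s)}$ and $V(\lambda)\in\mathbb F[\lambda]^{(m+s)\times(m+s)}$ be unimodular with $U(\lambda)\widehat G(\lambda)V(\lambda)=\operatorname{Diag}(G(\lambda),I_s)$. (a) $\begin{bmatrix}H_1(\lambda)\\H_2(\lambda)\end{bmatrix}$ (with $H_1$ having $n$ rows) is a right polynomial basis of $L(\lambda)$ if and only if $H_2(\lambda)=V(\lambda)\begin{bmatrix}H(\lambda)\\0\end{bmatrix}$ for some right polynomial basis $H(\lambda)$ of $G(\lambda)$ and $H_1(\lambda)=-(A_1\lambda+A_0)^{-1}(B_1\lambda+B_0)H_2(\lambda)$. (b) $\begin{bmatrix}H_1(\lambda)\\H_2(\lambda)\end{bmatrix}$ is a left polynomial basis of $L(\lambda)$ if and only if $H_2(\lambda)=U(\lambda)^T\begin{bmatrix}H(\lambda)\\0\end{bmatrix}$ for some left polynomial basis $H(\lambda)$ of $G(\lambda)$ and $H_1(\lambda)=((C_1\lambda+C_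0)(A_1\lambda+A_0)^{-1})^TH_2(\lambda)$.
   Context: $\mathbb F$ is an arbitrary field. A polynomial system matrix $\begin{bmatrix} A(\lambda) & B(\lambda)\\ -C(\lambda) & D(\lambda)\end{bmatrix}$ ($A$ square regular) has transfer function $D+CA^{-1}B$; it is minimal if $A,B$ are left coprime and $A,C$ right coprime (coprime meaning all common one-sided divisors are unimodular). A pencil $L(\lambda)$ as in the claim is a linearization of $G(\lambda)$ if it is a minimal polynomial system matrix of a rational matrix $\widehat G(\lambda)$ such that $\operatorname{Diag}(\widehat G(\lambda))$ and $\operatorname{Diag}(G(\lambda),I_s)$ are unimodularly equivalent for some $s\ge 0$. A right (left) polynomial basis of a rational matrix $G$ is a polynomial matrix whose columns form a basis of $\mathcal N_r(G)=\{x:Gx=0\}$ ($\mathcal N_\ell(G)=\{x:x^TG=0\}$). *)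

From HB Require Import structures.
From mathcomp Require Import all_boot all_order all_algebra.
Set Implicit Arguments. Unset Strict Implicit. Unset Printing Implicit Defensive.
Import GRing.Theory.
Local Open Scope ring_scope.

Section Defs.
Variable F : fieldType.

Definition ratF := {fraction {poly F}}.

Definition pm2rm m n (P : 'M[{poly F}]_(m, n)) : 'M[ratF]_(m, n) :=
  map_mx (fun p => tofrac p) P.

Definition pencil m n (M1 M0 : 'M[F]_(m, n)) : 'M[{poly F}]_(m, n) :=
  \matrix_(i, j) ((M1 i j)%:P * 'X + (M0 i j)%:P).

Definition unimodular n (U : 'M[{poly F}]_n) : Prop := U \in unitmx.

Definition regular n (A : 'M[{poly F}]_n) : Prop := \det A != 0.

Definition left_coprime n k (A : 'M[{poly F}]_n) (B : 'M[{poly F}]_(n, k)) : Prop :=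
  forall (X A' : 'M[{poly F}]_n) (B' : 'M[{poly F}]_(n, k)),
    A = X *m A' -> B = X *m B' -> unimodular X.

Definition right_coprime n k (A : 'M[{poly F}]_n) (C : 'M[{poly F}]_(k, n)) : Prop :=
  forall (X A' : 'M[{poly F}]_n) (C' : 'M[{poly F}]_(k, n)),
    A = A' *m X -> C = C' *m X -> unimodular X.

Definition transfer n q r (A : 'M[{poly F}]_n) (B : 'M[{poly F}]_(n, r))
  (C : 'M[{poly F}]_(q, n)) (D : 'M[{poly F}]_(q, r)) : 'M[ratF]_(q, r) :=
  pm2rm D + pm2rm C *m invmx (pm2rm A) *m pm2rm B.

Definition minimal_psm n q r (A : 'M[{poly F}]_n) (B : 'M[{poly F}]_(n, r))
  (C : 'M[{poly F}]_(q, n)) (D : 'M[{poly F}]_(q, r)) : Prop :=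
  [/\ regular A, left_coprime A B & right_coprime A C].

Definition linearization n p m s
  (A : 'M[{poly F}]_n) (B : 'M[{poly F}]_(n, m + s))
  (C : 'M[{poly F}]_(p + s, n)) (D : 'M[{poly F}]_(p + s, m + s))
  (G : 'M[ratF]_(p, m)) : Prop :=
  minimal_psm A B C D /\
  exists (U : 'M[{poly F}]_(p + s)) (V : 'M[{poly F}]_(m + s)),
    [/\ unimodular U, unimodular V &
        pm2rm U *m transfer A B C D *m pm2rm V = block_mx G 0 0 1%:M].

(* H (polynomial, m x k) is a right polynomial basis of the rational p x m
   matrix G: its columns form a basis of N_r(G) over F(lambda). *)
Definition right_poly_basis p m k (G : 'M[ratF]_(p, m)) (H : 'M[{poly F}]_(m, k))
  : Prop :=
  [/\ G *m pm2rm H = 0,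
      row_free (pm2rm H)^T &
      forall x : 'cV[ratF]_m, G *m x = 0 -> (x^T <= (pm2rm H)^T)%MS].

(* H (polynomial, p x k) is a left polynomial basis of G: its columns form a
   basis of N_l(G) = {x : x^T G = 0}. *)
Definition left_poly_basis p m k (G : 'M[ratF]_(p, m)) (H : 'M[{poly F}]_(p, k))
  : Prop :=
  [/\ (pm2rm H)^T *m G = 0,
      row_free (pm2rm H)^T &
      forall x : 'cV[ratF]_p, x^T *m G = 0 -> (x^T <= (pm2rm H)^T)%MS].

End Defs.

(** The right null space of the pencil [L] is parametrized by its lower block:
    [L x = 0] iff [x1 = - A^-1 B x2] and [Ghat x2 = 0], since [Ghat] is the
    Schur complement of [A] in [L].  Hence polynomial bases of [N_r(L)] are
    exactly the [col_mx (- A^-1 B H2) H2] with [H2] a basis of [N_r(Ghat)].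
    Multiplying by unimodular matrices transports null bases, so those of
    [Ghat = U^-1 Diag(G, I) V^-1] are the [V col_mx H 0] with [H] a basis of
    [N_r(G)]; unimodularity of [V] keeps [H] polynomial.  The left case is the
    right case for the transposed pencil. *)

From HB Require Import structures.
From mathcomp Require Import all_boot all_order all_algebra.
From Corelib Require Import Setoid.
Set Implicit Arguments. Unset Strict Implicit. Unset Printing Implicit Defensive.
Import GRing.Theory.
Local Open Scope ring_scope.

Section NullBasis.
Variable K : fieldType.

Definition null_basis r c k (M : 'M[K]_(r, c)) (X : 'M[K]_(c, k)) : Prop :=
  [/\ M *m X = 0, row_free X^T &
      forall x : 'cV[K]_c, M *m x = 0 -> (x^T <= X^T)%MS].

Lemma row_free_trP r c (X : 'M[K]_(r, c)) :
  row_free X^T <-> forall q (w : 'M[K]_(c, q)), X *m w = 0 -> w = 0.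
Proof.
split=> [freeX q w Xw0 | injX].
  apply: trmx_inj; apply/eqP.
  by rewrite trmx0 -(mulmx_free_eq0 _ freeX) -trmx_mul Xw0 trmx0.
rewrite -kermx_eq0; apply/eqP/trmx_inj; rewrite trmx0; apply: injX.
by rewrite -[X in X *m _]trmxK -trmx_mul mulmx_ker trmx0.
Qed.

Lemma tr_submxP r c (x : 'cV[K]_r) (X : 'M[K]_(r, c)) :
  (x^T <= X^T)%MS <-> exists w : 'cV[K]_c, x = X *m w.
Proof.
split=> [/submxP[w xw] | [w ->]]; last by rewrite trmx_mul submxMl.
by exists w^T; rewrite -[x]trmxK xw trmx_mul trmxK.
Qed.

Lemma col_mx_eq0P m1 m2 q (y : 'M[K]_(m1, q)) (z : 'M[K]_(m2, q)) :
  col_mx y z = 0 <-> y = 0 /\ z = 0.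
Proof.
by split=> [/eqP | [-> ->]]; rewrite ?col_mx0 // col_mx_eq0 => /andP[/eqP ? /eqP].
Qed.

Lemma mulmx_unit_eq0 r q (u : 'M[K]_r) (Y : 'M[K]_(r, q)) :
  u \in unitmx -> u *m Y = 0 <-> Y = 0.
Proof.
by move=> u_unit; split=> [uY0 | ->]; rewrite ?mulmx0 // -(mulKmx u_unit Y) uY0 mulmx0.
Qed.

Lemma null_basis_unit_mul r c k (u : 'M[K]_r) (M : 'M[K]_(r, c)) (X : 'M[K]_(c, k)) :
  u \in unitmx -> null_basis (u *m M) X <-> null_basis M X.
Proof.
move=> u_unit; have uM0 q (y : 'M[K]_(c, q)) : u *m M *m y = 0 <-> M *m y = 0.
  by rewrite -mulmxA; apply: mulmx_unit_eq0.
split=> -[MX0 freeX spanX]; split=> //.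
- exact/uM0.
- by move=> x /uM0; apply: spanX.
- exact/uM0.
- by move=> x /uM0; apply: spanX.
Qed.

Lemma null_basis_mul_unit r c k (M : 'M[K]_(r, c)) (v : 'M[K]_c) (X : 'M[K]_(c, k)) :
  v \in unitmx -> null_basis (M *m v) X <-> null_basis M (v *m X).
Proof.
move=> v_unit; have freeE : row_free (v *m X)^T <-> row_free X^T.
  rewrite !row_free_trP; split=> injX q w Xw0; apply: injX.
  - by rewrite -mulmxA Xw0 mulmx0.
  - by move: Xw0; rewrite -mulmxA mulmx_unit_eq0.
rewrite /null_basis mulmxA; split=> -[MX0 freeX spanX]; split=> //;
  try exact/freeE; move=> x Mx0.
- have /spanX/tr_submxP[w xw] : M *m v *m (invmx v *m x) = 0.
    by rewrite -mulmxA mulKVmx.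
  by apply/tr_submxP; exists w; rewrite -mulmxA -xw mulKVmx.
- have /spanX/tr_submxP[w vxw] : M *m (v *m x) = 0 by rewrite mulmxA.
  apply/tr_submxP; exists w.
  by rewrite -(mulKmx v_unit x) vxw mulmxA mulKmx.
Qed.

Lemma null_basis_block_diag1 p m s k (G : 'M[K]_(p, m)) (Z : 'M[K]_(m + s, k)) :
  null_basis (block_mx G 0 0 1%:M) Z <-> exists h, null_basis G h /\ Z = col_mx h 0.
Proof.
have diagE q (y : 'M[K]_(m, q)) (z : 'M[K]_(s, q)) :
    block_mx G 0 0 1%:M *m col_mx y z = col_mx (G *m y) z.
  by rewrite mul_block_col !mul0mx mul1mx addr0 add0r.
split=> [[DZ0 freeZ spanZ] | [h [[Gh0 freeh spanh] ->]]].
  rewrite -[Z]vsubmxK in DZ0 freeZ spanZ *.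
  move: DZ0; rewrite diagE col_mx_eq0P => -[GZ0 dZ0].
  rewrite dZ0 in freeZ spanZ *.
  exists (usubmx Z); split=> //; split=> // [|y Gy0].
    apply/row_free_trP=> q w Zw0; move/row_free_trP: freeZ; apply.
    by rewrite mul_col_mx Zw0 mul0mx col_mx0.
  have : block_mx G 0 0 1%:M *m col_mx y (0 : 'cV_s) = 0 by rewrite diagE Gy0 col_mx0.
  move/spanZ/tr_submxP=> [w].
  by rewrite mul_col_mx => /eq_col_mx[yw _]; apply/tr_submxP; exists w.
split.
- by rewrite diagE Gh0 col_mx0.
- apply/row_free_trP=> q w; rewrite mul_col_mx col_mx_eq0P => -[hw0 _].
  by move/row_free_trP: freeh; apply.
- move=> x; rewrite -[x]vsubmxK diagE col_mx_eq0P => -[/spanh/tr_submxP[w xw] ->].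
  by apply/tr_submxP; exists w; rewrite mul_col_mx mul0mx -xw.
Qed.

Lemma null_basis_equiv_block_diag1 p m s k (G : 'M[K]_(p, m))
    (g : 'M[K]_(p + s, m + s)) (u : 'M[K]_(p + s)) (v : 'M[K]_(m + s))
    (X : 'M[K]_(m + s, k)) :
  u \in unitmx -> v \in unitmx -> u *m g *m v = block_mx G 0 0 1%:M ->
  null_basis g X <-> exists h, null_basis G h /\ X = v *m col_mx h 0.
Proof.
move=> u_unit v_unit ugv.
rewrite -(null_basis_unit_mul _ _ u_unit) -{1}[X](mulKVmx v_unit).
rewrite -null_basis_mul_unit // ugv null_basis_block_diag1.
by split=> -[h [hb e]]; exists h; split; rewrite // ?e ?mulKmx // -e mulKVmx.
Qed.

Definition schur_complement n q r (a : 'M[K]_n) (b : 'M[K]_(n, r))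
    (c : 'M[K]_(q, n)) (d : 'M[K]_(q, r)) : 'M[K]_(q, r) :=
  d - c *m invmx a *m b.

Section BlockNullBasis.
Variables (n q r : nat) (a : 'M[K]_n) (b : 'M[K]_(n, r)) (c : 'M[K]_(q, n))
  (d : 'M[K]_(q, r)).
Hypothesis a_unit : a \in unitmx.

Lemma mul_block_col_eq0 k (x1 : 'M[K]_(n, k)) (x2 : 'M[K]_(r, k)) :
  block_mx a b c d *m col_mx x1 x2 = 0 <->
  x1 = - (invmx a *m b) *m x2 /\ schur_complement a b c d *m x2 = 0.
Proof.
have x1E : a *m x1 + b *m x2 = 0 <-> x1 = - (invmx a *m b) *m x2.
  split=> [/eqP | ->].
    by rewrite addr_eq0 => /eqP ax1; rewrite -(mulKmx a_unit x1) ax1 mulmxN mulNmx mulmxA.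
  by rewrite !mulmxA mulmxN mulmxA mulmxV // mul1mx mulNmx addNr.
have schurE : c *m (- (invmx a *m b) *m x2) + d *m x2 = schur_complement a b c d *m x2.
  by rewrite /schur_complement mulNmx mulmxN !mulmxA mulmxBl addrC.
rewrite mul_block_col col_mx_eq0P -schurE.
split=> [[/x1E ex1 e2] | [ex1 e2]]; first by split=> //; rewrite -ex1.
by split; [exact/x1E | rewrite ex1].
Qed.

Lemma null_basis_block_mx k (h1 : 'M[K]_(n, k)) (h2 : 'M[K]_(r, k)) :
  null_basis (block_mx a b c d) (col_mx h1 h2) <->
  null_basis (schur_complement a b c d) h2 /\ h1 = - (invmx a *m b) *m h2.
Proof.
split=> [[/mul_block_col_eq0[h1E Sh0] freeh spanh] | [[Sh0 freeh2 spanh2] h1E]].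
  split=> //; split=> // [|y Sy0].
    apply/row_free_trP=> q' w h2w0; move/row_free_trP: freeh; apply.
    by rewrite mul_col_mx h1E -mulmxA h2w0 mulmx0 col_mx0.
  have : block_mx a b c d *m col_mx (- (invmx a *m b) *m y) y = 0.
    exact/mul_block_col_eq0.
  move/spanh/tr_submxP=> [w].
  by rewrite mul_col_mx => /eq_col_mx[_ yw]; apply/tr_submxP; exists w.
split.
- exact/mul_block_col_eq0.
- apply/row_free_trP=> q' w; rewrite mul_col_mx col_mx_eq0P => -[_].
  by move/row_free_trP: freeh2; apply.
- move=> x; rewrite -[x]vsubmxK => /mul_block_col_eq0[x1E /spanh2/tr_submxP[w x2E]].
  by apply/tr_submxP; exists w; rewrite mul_col_mx h1E x1E x2E mulmxA.
Qed.

End BlockNullBasis.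

End NullBasis.

Section PolynomialMatrices.
Variable F : fieldType.

Lemma pm2rmE r c (P : 'M[{poly F}]_(r, c)) : pm2rm P = map_mx (@tofrac _) P.
Proof. by []. Qed.

Lemma pm2rmM r c q (P : 'M[{poly F}]_(r, c)) (Q : 'M[{poly F}]_(c, q)) :
  pm2rm (P *m Q) = pm2rm P *m pm2rm Q.
Proof. by rewrite !pm2rmE map_mxM. Qed.

Lemma pm2rm_col_mx r1 r2 c (P : 'M[{poly F}]_(r1, c)) (Q : 'M[{poly F}]_(r2, c)) :
  pm2rm (col_mx P Q) = col_mx (pm2rm P) (pm2rm Q).
Proof. by rewrite !pm2rmE map_col_mx. Qed.

Lemma pm2rm_tr r c (P : 'M[{poly F}]_(r, c)) : pm2rm P^T = (pm2rm P)^T.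
Proof. by rewrite !pm2rmE map_trmx. Qed.

Lemma pm2rm_inj r c : injective (@pm2rm F r c).
Proof.
move=> P Q /matrixP PQ; apply/matrixP=> i j.
by move/eqP: (PQ i j); rewrite !mxE tofrac_eq => /eqP.
Qed.

Lemma pm2rm_unitmx r (U : 'M[{poly F}]_r) : U \in unitmx -> pm2rm U \in unitmx.
Proof. by rewrite pm2rmE !unitmxE det_map_mx; apply: rmorph_unit. Qed.

Lemma regular_pm2rm_unitmx r (A : 'M[{poly F}]_r) : regular A -> pm2rm A \in unitmx.
Proof. by rewrite /regular pm2rmE unitmxE det_map_mx unitfE tofrac_eq0. Qed.

Lemma exists_pm2rm_col_mx0 q s k (P : 'M[ratF F]_(q, k) -> Prop)
    (Q : 'M[{poly F}]_(q, k) -> Prop) (V : 'M[{poly F}]_(q + s))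
    (H2 : 'M[{poly F}]_(q + s, k)) :
  (forall H, Q H <-> P (pm2rm H)) -> V \in unitmx ->
  (exists h, P h /\ pm2rm H2 = pm2rm V *m col_mx h 0) <->
  (exists H, Q H /\ H2 = V *m col_mx H 0).
Proof.
move=> QP V_unit; have pm2rm0 q' k' : pm2rm (0 : 'M[{poly F}]_(q', k')) = 0.
  by rewrite pm2rmE map_mx0.
split=> [[h [Ph H2E]] | [H [QH ->]]]; last first.
  by exists (pm2rm H); rewrite -QP pm2rmM pm2rm_col_mx pm2rm0.
have colE : pm2rm (invmx V *m H2) = col_mx h 0.
  by rewrite pm2rmM H2E mulmxA -pm2rmM mulVmx // pm2rmE map_mx1 mul1mx.
have hE : pm2rm (usubmx (invmx V *m H2)) = h.
  by rewrite -[h](col_mxKu _ (0 : 'M_(s, k))) -colE !pm2rmE map_usubmx.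
exists (usubmx (invmx V *m H2)); rewrite QP hE; split=> //.
by apply: pm2rm_inj; rewrite H2E pm2rmM pm2rm_col_mx pm2rm0 hE.
Qed.

Lemma right_poly_basisE p m k (G : 'M[ratF F]_(p, m)) (H : 'M[{poly F}]_(m, k)) :
  right_poly_basis G H <-> null_basis G (pm2rm H).
Proof. by []. Qed.

Lemma left_poly_basisE p m k (G : 'M[ratF F]_(p, m)) (H : 'M[{poly F}]_(p, k)) :
  left_poly_basis G H <-> null_basis G^T (pm2rm H).
Proof.
have trE q (Y : 'M[ratF F]_(p, q)) : Y^T *m G = 0 <-> G^T *m Y = 0.
  by split=> YG0; apply: trmx_inj; rewrite trmx0 trmx_mul trmxK.
split=> -[H0 freeH spanH]; split=> //.
- exact/trE.
- by move=> x /trE; apply: spanH.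
- exact/trE.
- by move=> x /trE; apply: spanH.
Qed.

Lemma transfer_schur n q r (A : 'M[{poly F}]_n) (B : 'M[{poly F}]_(n, r))
    (C : 'M[{poly F}]_(q, n)) (D : 'M[{poly F}]_(q, r)) :
  transfer A B C D = schur_complement (pm2rm A) (pm2rm B) (- pm2rm C) (pm2rm D).
Proof. by rewrite /transfer /schur_complement !mulNmx opprK. Qed.

Lemma trmx_transfer n q r (A : 'M[{poly F}]_n) (B : 'M[{poly F}]_(n, r))
    (C : 'M[{poly F}]_(q, n)) (D : 'M[{poly F}]_(q, r)) :
  (transfer A B C D)^T =
  schur_complement (pm2rm A)^T (- pm2rm C)^T (pm2rm B)^T (pm2rm D)^T.
Proof.
rewrite /transfer /schur_complement linearD /= !trmx_mul trmx_inv linearN /=.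
by rewrite mulmxN opprK mulmxA.
Qed.

End PolynomialMatrices.

Theorem theorem4p3 (F : fieldType) (n p m s : nat)
  (A1 A0 : 'M[F]_n) (B1 B0 : 'M[F]_(n, m + s))
  (C1 C0 : 'M[F]_(p + s, n)) (D1 D0 : 'M[F]_(p + s, m + s))
  (G : 'M[ratF F]_(p, m))
  (U : 'M[{poly F}]_(p + s)) (V : 'M[{poly F}]_(m + s)) :
  let A := pencil A1 A0 in
  let B := pencil B1 B0 in
  let C := pencil C1 C0 in
  let D := pencil D1 D0 in
  let L : 'M[{poly F}]_(n + (p + s), n + (m + s)) := block_mx A B (- C) D in
  let Ghat := transfer A B C D in
  linearization A B C D G ->
  unimodular U -> unimodular V ->
  pm2rm U *m Ghat *m pm2rm V = block_mx G 0 0 1%:M ->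
  (forall (k : nat) (H1 : 'M[{poly F}]_(n, k)) (H2 : 'M[{poly F}]_(m + s, k)),
     right_poly_basis (pm2rm L) (col_mx H1 H2) <->
     (exists H : 'M[{poly F}]_(m, k),
        right_poly_basis G H /\ H2 = V *m col_mx H 0) /\
     pm2rm H1 = - (invmx (pm2rm A) *m pm2rm B) *m pm2rm H2) /\
  (forall (k : nat) (H1 : 'M[{poly F}]_(n, k)) (H2 : 'M[{poly F}]_(p + s, k)),
     left_poly_basis (pm2rm L) (col_mx H1 H2) <->
     (exists H : 'M[{poly F}]_(p, k),
        left_poly_basis G H /\ H2 = U^T *m col_mx H 0) /\
     pm2rm H1 = (pm2rm C *m invmx (pm2rm A))^T *m pm2rm H2).
Proof.
move=> A B C D L Ghat [[regA _ _] _] U_unit V_unit UGV.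
have A_unit := regular_pm2rm_unitmx regA.
have LE : pm2rm L = block_mx (pm2rm A) (pm2rm B) (- pm2rm C) (pm2rm D).
  by rewrite pm2rmE map_block_mx map_mxN.
split=> k H1 H2.
  rewrite right_poly_basisE pm2rm_col_mx LE null_basis_block_mx // -transfer_schur.
  rewrite (null_basis_equiv_block_diag1 _ _ _ UGV) ?pm2rm_unitmx //.
  by rewrite (exists_pm2rm_col_mx0 _ (@right_poly_basisE _ _ _ _ G) V_unit).
have UGV_tr : (pm2rm V)^T *m Ghat^T *m (pm2rm U)^T = block_mx G^T 0 0 1%:M.
  by rewrite -!trmx_mul mulmxA UGV tr_block_mx !trmx0 trmx1.
have inv_trE : - (invmx (pm2rm A)^T *m (- pm2rm C)^T) = (pm2rm C *m invmx (pm2rm A))^T.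
  by rewrite linearN /= mulmxN opprK trmx_mul trmx_inv.
have UT_unit : U^T \in unitmx by rewrite unitmx_tr.
rewrite left_poly_basisE pm2rm_col_mx LE tr_block_mx.
rewrite null_basis_block_mx ?unitmx_tr // -trmx_transfer inv_trE.
rewrite (null_basis_equiv_block_diag1 _ _ _ UGV_tr) ?unitmx_tr ?pm2rm_unitmx //.
rewrite -[(pm2rm U)^T]pm2rm_tr.
by rewrite (exists_pm2rm_col_mx0 _ (@left_poly_basisE _ _ _ _ G) UT_unit).
Qed.
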